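(* Let $H$ be a group with a metric $d$ and $r\ge3$ an integer. For every sequence $\beta_0=0<\beta_1<3\beta_1<\beta_2<3\beta_2<\cdots<\beta_{r-1}<3\beta_{r-1}<\beta_r$ we have $$H^r=\Delta(\beta_r)\cup\Big(\bigcup_{j=0}^{r-1}\ \bigcup_{\mathcal{Q}:\,|\mathcal{Q}|\ge2}\Delta_{\mathcal{Q}}(3\beta_j,\beta_{j+1})\Big),$$ where $\mathcal{Q}$ ranges over partitions of $[r]=\{1,\dots,r\}$ with at least two blocks.
   Context: For $\underline h=(h_1,\dots,h_r)\in H^r$ and $I,J\subset[r]$: $d^I(\underline h)=\max\{d(h_i,h_j):i,j\in I\}$, $d_{I,J}(\underline h)=\min\{d(h_i,h_j):i\in I,j\in J\}$. For a partition $\mathcal{Q}$ of $[r]$: $d^{\mathcal{Q}}(\underline h)=\max_{I\in\mathcal{Q}}d^I(\underline h)$, $d_{\mathcal{Q}}(\underline h)=\min\{d_{I,J}(\underline h):I\ne J,\ I,J\in\mathcal{Q}\}$, and $\Delta_{\mathcal{Q}}(\alpha,\beta)=\{\underline h\in H^r:d^{\mathcal{Q}}(\underline h)\le\alpha,\ d_{\mathcal{Q}}(\underline h)>\beta\}$. Also $\Delta(\beta)=\{\underline h\in H^r:\max_{i,j}d(h_i,h_j)\le\beta\}$. *)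

From mathcomp Require Import all_boot all_order all_algebra.
From mathcomp Require Import reals.
Set Implicit Arguments. Unset Strict Implicit. Unset Printing Implicit Defensive.
Import Order.TTheory GRing.Theory Num.Theory.
Local Open Scope ring_scope.

Definition is_group (H : Type) (mul : H -> H -> H) (inv : H -> H) (e : H) : Prop :=
  [/\ (forall x y z, mul x (mul y z) = mul (mul x y) z),
      (forall x, mul e x = x /\ mul x e = x) &
      (forall x, mul (inv x) x = e /\ mul x (inv x) = e)].

Definition is_metric (R : realType) (H : Type) (d : H -> H -> R) : Prop :=
  [/\ (forall x y, 0 <= d x y),
      (forall x y, d x y = 0 <-> x = y),
      (forall x y, d x y = d y x) &
      (forall x y z, d x z <= d x y + d y z)].

(* Delta(beta) = { h in H^r : max_{i,j} d(h_i,h_j) <= beta }  (r >= 1, so the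
   max over a nonempty finite set is <= beta iff every term is). *)
Definition Delta (R : realType) (H : Type) (d : H -> H -> R) (r : nat)
  (beta : R) (h : 'I_r -> H) : Prop :=
  forall i j : 'I_r, d (h i) (h j) <= beta.

(* Delta_Q(alpha,beta) = { h : d^Q(h) <= alpha, d_Q(h) > beta }, where
   d^Q(h) = max_{I in Q} max_{i,j in I} d(h_i,h_j) and
   d_Q(h) = min_{I <> J in Q} min_{i in I, j in J} d(h_i,h_j);
   the finite max/min (over nonempty index sets) are unfolded. *)
Definition DeltaQ (R : realType) (H : Type) (d : H -> H -> R) (r : nat)
  (Q : {set {set 'I_r}}) (alpha beta : R) (h : 'I_r -> H) : Prop :=
  (forall I, I \in Q -> forall i j, i \in I -> j \in I -> d (h i) (h j) <= alpha) /\
  (forall I J, I \in Q -> J \in Q -> I != J ->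
     forall i j, i \in I -> j \in J -> beta < d (h i) (h j)).

(** Single-linkage clustering of the points [h_1, ..., h_r] at the scales
    [beta_1 < beta_2 < ...].  Keep a labelling of the indices whose classes have
    diameter at most [3 beta_j].  If two classes contain points at distance at
    most [beta_(j+1)], merge them: by the triangle inequality the new class has
    diameter at most [6 beta_j + beta_(j+1) < 3 beta_(j+1)].  Otherwise the
    classes are [beta_(j+1)]-separated, which places [h] in some
    [Delta_Q(3 beta_j, beta_(j+1))], or in [Delta(beta_r)] if there is only one
    class.  Each merge removes a class, so after [r - 1] merges a single class of
    diameter at most [3 beta_(r-1) < beta_r] is left. *)
From mathcomp Require Import all_boot all_order all_algebra.
From mathcomp Require Import reals.
From mathcomp Require Import lra.
Set Implicit Arguments. Unset Strict Implicit. Unset Printing Implicit Defensive.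
Import Order.TTheory GRing.Theory Num.Theory.
Local Open Scope ring_scope.

Lemma card_preim_partition (T rT : finType) (f : T -> rT) (D : {set T}) :
  #|preim_partition f D| = #|f @: D|.
Proof.
rewrite /preim_partition /equivalence_partition.
have -> : [set [set y in D | f x == f y] | x in D]
        = [set [set y in D | l == f y] | l in f @: D].
  by rewrite -imset_comp.
apply: card_in_imset => l l' /imsetP [x Dx ->] _ /setP /(_ x).
by rewrite !inE Dx eqxx => /esym /eqP ->.
Qed.

Section Clustering.

Variables (R : realType) (H : Type) (d : H -> H -> R).
Hypothesis d_metric : is_metric d.
Variables (T : finType) (h : T -> H).

Definition clusters_bounded (f : T -> T) (alpha : R) : Prop :=
  forall x y, f x = f y -> d (h x) (h y) <= alpha.

Definition clusters_separated (f : T -> T) (beta : R) : Prop :=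
  forall x y, f x != f y -> beta < d (h x) (h y).

Definition nclusters (f : T -> T) : nat := #|f @: [set: T]|.

Lemma clusters_bounded_id : clusters_bounded id 0.
Proof. by case: d_metric => _ dE _ _ x y /= ->; rewrite (proj2 (dE _ _)). Qed.

Lemma nclusters_id : nclusters id = #|T|.
Proof. by rewrite /nclusters imset_id cardsT. Qed.

Lemma clusters_bounded_le f alpha alpha' :
  alpha <= alpha' -> clusters_bounded f alpha -> clusters_bounded f alpha'.
Proof. by move=> le_alpha fB x y /fB /le_trans; apply. Qed.

Lemma nclusters_le1_bounded f alpha :
  clusters_bounded f alpha -> (nclusters f <= 1)%N ->
  forall x y, d (h x) (h y) <= alpha.
Proof.
move=> fB le1 x y; apply: fB.
by apply: (card_le1_eqP le1); apply: imset_f; rewrite inE.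
Qed.

Lemma merge_clusters f alpha beta x y :
  clusters_bounded f alpha -> f x != f y -> d (h x) (h y) <= beta ->
  exists g, clusters_bounded g (2 * alpha + beta) /\
            (nclusters g < nclusters f)%N.
Proof.
move=> fB fxy dxy; case: d_metric => d_ge0 dE dC dT.
pose g z := if f z == f y then f x else f z.
exists g; split.
  have alpha_ge0 : 0 <= alpha by rewrite -(proj2 (dE (h x) _) erefl); exact: fB.
  have cross a b : f a = f x -> f b = f y -> d (h a) (h b) <= 2 * alpha + beta.
    move=> /fB dax /fB dby; have := dT (h a) (h x) (h b).
    have := dT (h x) (h y) (h b); rewrite dC in dby; lra.
  have same a b : f a = f b -> d (h a) (h b) <= 2 * alpha + beta.
    by move=> /fB dab; have := d_ge0 (h x) (h y); lra.
  rewrite /g => a b; case: eqP => fay; case: eqP => fby.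
  - by move=> _; apply: same; rewrite fay fby.
  - by move=> fba; rewrite dC; apply: cross.
  - by move=> fab; apply: cross.
  - exact: same.
have sub_g : g @: [set: T] \subset (f @: [set: T]) :\ f y.
  apply/subsetP => _ /imsetP [z _ ->]; rewrite /g !inE.
  by case: ifPn => [_|->]; rewrite ?fxy imset_f.
apply: leq_ltn_trans (subset_leq_card sub_g) _.
by rewrite /nclusters [X in (_ < X)%N](cardsD1 (f y)) imset_f ?inE.
Qed.

Lemma separated_or_merge f alpha beta :
  clusters_bounded f alpha ->
  clusters_separated f beta \/
  exists g, clusters_bounded g (2 * alpha + beta) /\
            (nclusters g < nclusters f)%N.
Proof.
move=> fB.
have [/existsP [x /existsP [y /andP [fxy dxy]]] | no_close] :=
  boolP [exists x, exists y, (f x != f y) && (d (h x) (h y) <= beta)].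
  by right; apply: merge_clusters fxy dxy.
left => x y fxy; rewrite ltNge; apply: contra no_close => dxy.
by apply/existsP; exists x; apply/existsP; exists y; rewrite fxy.
Qed.

End Clustering.

Lemma DeltaQ_preim_partition (R : realType) (H : Type) (d : H -> H -> R)
    (r : nat) (h : 'I_r -> H) f alpha beta :
  clusters_bounded d h f alpha -> clusters_separated d h f beta ->
  DeltaQ d (preim_partition f [set: 'I_r]) alpha beta h.
Proof.
move=> fB fS; split.
  move=> _ /imsetP [z _ ->] i j; rewrite !inE => /eqP fzi /eqP fzj.
  by apply: fB; rewrite -fzi -fzj.
move=> _ _ /imsetP [z _ ->] /imsetP [w _ ->] zw i j.
rewrite !inE => /eqP fzi /eqP fwj; apply: fS.
apply: contra zw => /eqP fij; apply/eqP/setP => t.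
by rewrite !inE fzi fij fwj.
Qed.

Section Scales.

Variables (R : realType) (r : nat) (beta : nat -> R).
Hypothesis beta0 : beta 0%N = 0.
Hypothesis beta_gap : forall j : nat, (j < r)%N -> 3 * beta j < beta j.+1.

Lemma beta_ge0 j : (j <= r)%N -> 0 <= beta j.
Proof.
elim: j => [|j IHj] le_jr; first by rewrite beta0.
by have := beta_gap le_jr; have := IHj (ltnW le_jr); lra.
Qed.

Lemma beta_le j k : (j <= k)%N -> (k <= r)%N -> beta j <= beta k.
Proof.
move=> /subnKC <-; elim: (k - j)%N => [|n IHn]; first by rewrite addn0.
rewrite addnS => le_r; have le_r' := ltnW le_r.
have := beta_gap le_r; have := beta_ge0 le_r'; have := IHn le_r'; lra.
Qed.

Lemma three_beta_le_last j : (j < r)%N -> 3 * beta j <= beta r.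
Proof. by move=> lt_jr; apply/ltW/(lt_le_trans (beta_gap lt_jr))/beta_le. Qed.

End Scales.

Section Covering.

Variables (R : realType) (H : Type) (d : H -> H -> R).
Hypothesis d_metric : is_metric d.
Variables (r : nat) (beta : nat -> R).
Hypothesis beta0 : beta 0%N = 0.
Hypothesis beta_gap : forall j : nat, (j < r)%N -> 3 * beta j < beta j.+1.
Variable h : 'I_r -> H.

Definition in_Delta_union : Prop :=
  Delta d (beta r) h \/
  exists j : nat, (j < r)%N /\
    exists Q : {set {set 'I_r}},
      [/\ partition Q [set: 'I_r], (2 <= #|Q|)%N &
          DeltaQ d Q (3 * beta j) (beta j.+1) h].

Lemma separated_in_Delta_union j f :
  (j < r)%N -> clusters_bounded d h f (3 * beta j) ->
  clusters_separated d h f (beta j.+1) -> in_Delta_union.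
Proof.
move=> lt_jr fB fS; have [le1 | gt1] := leqP (nclusters f) 1.
  left => x y; apply: le_trans _ (three_beta_le_last beta0 beta_gap lt_jr).
  exact: nclusters_le1_bounded fB le1 x y.
right; exists j; split=> //; exists (preim_partition f [set: 'I_r]).
split; first exact: preim_partitionP.
  by rewrite card_preim_partition.
exact: DeltaQ_preim_partition.
Qed.

Lemma clustering_invariant j :
  (j < r)%N -> in_Delta_union \/
  exists f, clusters_bounded d h f (3 * beta j) /\ (nclusters f + j <= r)%N.
Proof.
elim: j => [|j IHj] lt_jr.
  right; exists id; rewrite beta0 mulr0 addn0 nclusters_id card_ord.
  by split; first exact: clusters_bounded_id.
have [|[f [fB n_f]]] := IHj (ltnW lt_jr); first by left.
have [fS | [g [gB lt_gf]]] := separated_or_merge d_metric (beta j.+1) fB.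
  by left; apply: separated_in_Delta_union (ltnW lt_jr) fB fS.
right; exists g; split.
  by apply: clusters_bounded_le gB; have := beta_gap (ltnW lt_jr); lra.
by rewrite addnS; apply: leq_trans _ n_f; rewrite ltn_add2r.
Qed.

End Covering.

Theorem proposition6p2 (R : realType) (H : Type)
  (mul : H -> H -> H) (inv : H -> H) (e : H) (Hgrp : is_group mul inv e)
  (d : H -> H -> R) (Hd : is_metric d)
  (r : nat) (hr : (3 <= r)%N)
  (beta : nat -> R) (hb0 : beta 0%N = 0)
  (hb : forall j : nat, (j < r)%N -> 3 * beta j < beta j.+1) :
  forall h : 'I_r -> H,
    Delta d (beta r) h \/
    exists j : nat, (j < r)%N /\
      exists Q : {set {set 'I_r}},
        [/\ partition Q [set: 'I_r], (2 <= #|Q|)%N &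
            DeltaQ d Q (3 * beta j) (beta j.+1) h].
Proof.
move=> h; have r_gt0 : (0 < r)%N by apply: leq_trans hr.
have lt_r1 : (r.-1 < r)%N by rewrite ltn_predL.
have [//|[f [fB n_f]]] := clustering_invariant Hd hb0 hb h lt_r1.
have le1 : (nclusters f <= 1)%N.
  by move: n_f; rewrite -[X in (_ <= X)%N](prednK r_gt0) -add1n leq_add2r.
left => x y; apply: le_trans _ (three_beta_le_last hb0 hb lt_r1).
exact: nclusters_le1_bounded fB le1 x y.
Qed.
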